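(* Let $a\geq 1$ and $b\geq 2$ be integers. For Lebesgue-almost every $x\in cA$ there exists $k\geq 0$ such that $T_{a,b}^k(x)\in\Theta$.
   Context: For $n\geq 1$ let $\Lambda^n=\{x\in\mathbb{R}^n : 0\leq x_1\leq\cdots\leq x_n\}$. For integers $a,b\geq 1$ the map $T_{a,b}:\Lambda^{a+b}\to\Lambda^{a+b}$ sends $x$ to the vector obtained by arranging $x_1,\ldots,x_a,\,x_{a+1}-x_a,\ldots,x_{a+b}-x_a$ in nondecreasing order. Let $\sigma(x)=x_1+\cdots+x_{a+b}$, $cA=\{x\in\Lambda^{a+b}: \sigma(x)>b\,x_{a+b}\}$ and $\Theta=\{x\in cA : 2x_a\geq x_{a+b}\}$. *)

From mathcomp Require Import all_boot all_order all_algebra.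
From mathcomp Require Import reals.
Set Implicit Arguments. Unset Strict Implicit. Unset Printing Implicit Defensive.
Import Order.TTheory GRing.Theory Num.Theory.
Local Open Scope ring_scope.

Section Defs.
Variable R : realType.

(* 1-indexed coordinate: xc x k = x_k for 1 <= k <= n (0 otherwise). *)
Definition xc (n : nat) (x : 'I_n -> R) (k : nat) : R :=
  if insub k.-1 is Some i then x i else 0.

Definition Lam (n : nat) (x : 'I_n -> R) : Prop :=
  0 <= xc x 1 /\ forall k : nat, (1 <= k)%N -> (k < n)%N -> xc x k <= xc x k.+1.

Definition sigma (n : nat) (x : 'I_n -> R) : R := \sum_(i < n) x i.

Definition Tvals (a b : nat) (x : 'I_(a + b) -> R) : seq R :=
  [seq xc x k | k <- iota 1 a] ++ [seq xc x k - xc x a | k <- iota a.+1 b].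

Definition T (a b : nat) (x : 'I_(a + b) -> R) : 'I_(a + b) -> R :=
  fun i => nth 0 (sort <=%R (Tvals x)) i.

Definition cA (a b : nat) (x : 'I_(a + b) -> R) : Prop :=
  Lam x /\ b%:R * xc x (a + b) < sigma x.

Definition Theta (a b : nat) (x : 'I_(a + b) -> R) : Prop :=
  cA x /\ xc x (a + b) <= 2 * xc x a.

Definition lebesgue_null (n : nat) (N : ('I_n -> R) -> Prop) : Prop :=
  forall eps : R, 0 < eps ->
  exists lo hi : nat -> 'I_n -> R,
    (forall k i, lo k i <= hi k i) /\
    (forall x, N x -> exists k, forall i, lo k i <= x i <= hi k i) /\
    (forall m, \sum_(k < m) \prod_(i < n) (hi k i - lo k i) <= eps).
End Defs.

From mathcomp Require Import all_boot all_order all_algebra.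
From mathcomp Require Import reals.
From mathcomp Require Import lra.
Import Order.TTheory GRing.Theory Num.Theory.
Local Open Scope ring_scope.

(* Every orbit starting in cA reaches Theta, so the exceptional set is empty.
   Put e(x) := sigma(x) - b x_{a+b}, which is positive on cA.  Outside Theta we
   have x_{a+b} > 2 x_a, hence every entry of T x is at most x_{a+b} - x_a; it
   follows that T x stays in cA, that e does not decrease along the orbit, and
   that sigma(T x) = sigma(x) - b x_a <= sigma(x) - (b/a) e(x) (using
   sigma(x) <= a x_a + b x_{a+b}).  So sigma would decrease by at least
   (b/a) e(x0) > 0 at every step while staying nonnegative, which is absurd. *)

Lemma nth0_pred {R : zmodType} (P : R -> Prop) (s : seq R) i :
  P 0 -> {in s, forall v, P v} -> P (nth 0 s i).
Proof.
move=> P0 Ps; case: (ltnP i (size s)) => hi; first exact/Ps/mem_nth.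
by rewrite nth_default.
Qed.

Lemma no_linear_bound (R : realType) (c M : R) :
  0 < c -> ~ (forall k : nat, k%:R * c <= M).
Proof.
move=> c_gt0 bound.
have M_ge0 : 0 <= M / c by rewrite divr_ge0 ?(ltW c_gt0) // -(mul0r c) -[0]/0%:R.
have := archi_boundP M_ge0; rewrite ltr_pdivrMr //.
by move/lt_le_trans/(_ (bound _)); rewrite ltxx.
Qed.

Lemma lebesgue_null_empty (R : realType) (n : nat) (N : ('I_n -> R) -> Prop) :
  (0 < n)%N -> (forall x, ~ N x) -> lebesgue_null N.
Proof.
move=> n_gt0 N0 eps eps_gt0; exists (fun _ _ => 0), (fun _ _ => 0).
split=> //; split=> [x /N0 //|m].
rewrite big1 ?ltW // => k _.
by rewrite subrr prodr_const card_ord expr0n eqn0Ngt n_gt0.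
Qed.

Section Coordinates.
Context {R : realType}.

Lemma xc_ord (m : nat) (y : 'I_m -> R) (i : 'I_m) : xc y (val i).+1 = y i.
Proof.
rewrite /xc /=; case: insubP => [j _ /val_inj -> //|]; by rewrite ltn_ord.
Qed.

Lemma sigma_xc (m : nat) (y : 'I_m -> R) : sigma y = \sum_(1 <= k < m.+1) xc y k.
Proof.
rewrite /sigma big_add1 /= big_mkord; apply: eq_bigr => i _; by rewrite xc_ord.
Qed.

Lemma Lam_xc_le {m : nat} {y : 'I_m -> R} {i j : nat} : Lam y ->
  (1 <= i)%N -> (i <= j)%N -> (j <= m)%N -> xc y i <= xc y j.
Proof.
move=> [_ yS] hi; elim: j => [|j IH]; first by rewrite leqn0 => /eqP ->.
rewrite leq_eqVlt ltnS => /orP [/eqP -> //|hij] hj.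
exact: le_trans (IH hij (ltnW hj)) (yS j (leq_trans hi hij) hj).
Qed.

Lemma Lam_xc_ge0 {m : nat} {y : 'I_m -> R} : Lam y -> forall k, 0 <= xc y k.
Proof.
move=> yL [|k]; first by case: yL.
case: (leqP k.+1 m) => hk; last by rewrite /xc /= insubN // -leqNgt.
have [y1_ge0 _] := yL.
exact: le_trans y1_ge0 (Lam_xc_le yL (leqnn 1) (ltn0Sn k) hk).
Qed.

End Coordinates.

Section Dynamics.
Variable R : realType.
Variables a b : nat.
Hypothesis a_gt0 : (0 < a)%N.
Notation n := (a + b)%N.
Implicit Type x : 'I_n -> R.

Lemma size_Tvals x : size (Tvals x) = n.
Proof. by rewrite /Tvals size_cat !size_map !size_iota. Qed.

Lemma xc_T x k : xc (T x) k = nth 0 (sort <=%R (Tvals x)) k.-1.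
Proof.
rewrite /xc; case: insubP => [i _ <-|] //.
by rewrite -leqNgt => hk; rewrite nth_default // size_sort size_Tvals.
Qed.

Lemma sigma_T x : sigma (T x) = sigma x - b%:R * xc x a.
Proof.
have -> : sigma (T x) = \sum_(v <- Tvals x) v.
  rewrite /sigma -(perm_big _ (permEl (perm_sort <=%R _))).
  by rewrite (big_nth 0) size_sort size_Tvals big_mkord.
rewrite /Tvals big_cat !big_map /= sumrB big_const_seq count_predT size_iota.
rewrite iter_addr_0 mulr_natl addrA sigma_xc (big_cat_nat _ (n := a.+1)) //=.
  by rewrite /index_iota subn1 subSS addKn.
by rewrite ltnS leq_addr.
Qed.

Lemma mem_Tvals x v : v \in Tvals x ->
  (exists2 k, (1 <= k <= a)%N & v = xc x k) \/
  (exists2 k, (a < k <= n)%N & v = xc x k - xc x a).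
Proof.
rewrite mem_cat => /orP [] /mapP [k hk ->]; [left|right]; exists k => //.
  by move: hk; rewrite mem_iota add1n ltnS.
by move: hk; rewrite mem_iota addSn ltnS.
Qed.

Lemma Tvals_ge0 x : Lam x -> {in Tvals x, forall v, 0 <= v}.
Proof.
move=> xL v /mem_Tvals [[k _ ->]|[k /andP [hak hkn] ->]]; first exact: Lam_xc_ge0.
by rewrite subr_ge0 (Lam_xc_le xL a_gt0 (ltnW hak) hkn).
Qed.

Lemma Lam_T x : Lam x -> Lam (T x).
Proof.
move=> xL; split.
  rewrite xc_T; apply: (nth0_pred (fun v => 0 <= v)) => // v.
  by rewrite mem_sort; exact: Tvals_ge0.
move=> k hk1 hkn; rewrite !xc_T.
apply: (sorted_leq_nth le_trans le_refl 0 (sort_sorted le_total _)).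
- by rewrite inE size_sort size_Tvals; case: k hk1 hkn => // k _ /ltnW.
- by rewrite inE size_sort size_Tvals.
- by case: k hk1 hkn.
Qed.

Lemma Tvals_le x : Lam x -> 2 * xc x a < xc x n ->
  {in Tvals x, forall v, v <= xc x n - xc x a}.
Proof.
move=> xL big_top v /mem_Tvals [[k /andP [hk1 hka] ->]|[k /andP [hak hkn] ->]].
  have := Lam_xc_le xL hk1 hka (leq_addr _ _); have := Lam_xc_ge0 xL a; lra.
by rewrite lerD2r (Lam_xc_le xL (leq_trans (ltn0Sn a) hak) hkn).
Qed.

Lemma xc_T_last_le x : Lam x -> 2 * xc x a < xc x n ->
  xc (T x) n <= xc x n - xc x a.
Proof.
move=> xL big_top; rewrite xc_T.
apply: (nth0_pred (fun v => v <= xc x n - xc x a)); last first.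
  by move=> v; rewrite mem_sort; exact: Tvals_le.
have := Lam_xc_ge0 xL a; lra.
Qed.

Lemma sigma_le x : Lam x -> sigma x <= a%:R * xc x a + b%:R * xc x n.
Proof.
move=> xL; rewrite sigma_xc (big_cat_nat _ (n := a.+1)) //; last first.
  by rewrite ltnS leq_addr.
apply: lerD.
  apply: le_trans (ler_sum_nat (G := fun _ => xc x a) _) _.
    by move=> i /andP [hi1 hia]; exact: Lam_xc_le xL hi1 hia (leq_addr _ _).
  by rewrite sumr_const_nat subn1 mulr_natl.
apply: le_trans (ler_sum_nat (G := fun _ => xc x n) _) _.
  move=> i /andP [hai hin].
  exact: Lam_xc_le xL (leq_trans (ltn0Sn a) hai) hin (leqnn n).
by rewrite sumr_const_nat subSS addKn mulr_natl.
Qed.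

Definition excess x := sigma x - b%:R * xc x n.

Lemma T_notTheta {x} : cA x -> ~ Theta x ->
  [/\ cA (T x), excess x <= excess (T x) &
      a%:R * sigma (T x) + b%:R * excess x <= a%:R * sigma x].
Proof.
move=> [xL top_lt] xNTheta.
have big_top : 2 * xc x a < xc x n by rewrite ltNge; apply/negP => ?; exact: xNTheta.
have top_T : b%:R * xc (T x) n <= b%:R * (xc x n - xc x a).
  by rewrite ler_wpM2l // xc_T_last_le.
have bsigma : b%:R * sigma x <= b%:R * (a%:R * xc x a + b%:R * xc x n).
  by rewrite ler_wpM2l // sigma_le.
rewrite /cA /excess sigma_T; split; [split; [exact: Lam_T|lra] | lra | lra].
Qed.

Lemma iter_T_notTheta {x} : cA x -> (forall k, ~ Theta (iter k (@T R a b) x)) ->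
  forall k, [/\ cA (iter k (@T R a b) x), excess x <= excess (iter k (@T R a b) x) &
    a%:R * sigma (iter k (@T R a b) x) + k%:R * (b%:R * excess x) <= a%:R * sigma x].
Proof.
move=> xA xNTheta; elim=> [|k [yA ex_le sigma_le_x]]; first by rewrite mul0r addr0.
have [yTA ex_leT sigma_T_le] := T_notTheta yA (xNTheta k).
rewrite iterS; split=> //; first exact: le_trans ex_leT.
have : b%:R * excess x <= b%:R * excess (iter k (@T R a b) x) by rewrite ler_wpM2l.
rewrite -natr1; lra.
Qed.

Theorem cA_orbit_meets_Theta {x} : (0 < b)%N -> cA x ->
  ~ (forall k, ~ Theta (iter k (@T R a b) x)).
Proof.
move=> b_gt0 xA xNTheta.
have ex_gt0 : 0 < b%:R * excess x.
  by rewrite mulr_gt0 ?ltr0n // subr_gt0; case: xA.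
apply: (@no_linear_bound _ _ (a%:R * sigma x) ex_gt0) => k.
have [[yL _] _ bound] := iter_T_notTheta xA xNTheta k.
have : 0 <= a%:R * sigma (iter k (@T R a b) x).
  by rewrite mulr_ge0 // sigma_xc sumr_ge0 // => i _; exact: Lam_xc_ge0.
lra.
Qed.

End Dynamics.

Theorem lemma5p2 (R : realType) (a b : nat) (ha : (1 <= a)%N) (hb : (2 <= b)%N) :
  lebesgue_null
    (fun x : 'I_(a + b) -> R =>
       cA x /\ forall k : nat, ~ Theta (iter k (@T R a b) x)).
Proof.
apply: lebesgue_null_empty; first by rewrite addn_gt0 ha.
move=> x [xA xNTheta].
exact: cA_orbit_meets_Theta (leq_trans _ hb) xA xNTheta.
Qed.
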